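(* Let $V$ be a vertex algebra over $\mathbb{F}$ and let $W$ be a $(V,\mathcal{B})$-module. Set $W^{\mathcal{D}}=\{w\in W\mid \mathcal{D}^{(n)}w=0\text{ for all } n\ge1\}$. If $f:V\to W$ is a $V$-module homomorphism, then $f$ is a $(V,\mathcal{B})$-module homomorphism (i.e. also a $\mathcal{B}$-module homomorphism) if and only if $f(\mathbf{1})\in W^{\mathcal{D}}$. Furthermore, the map $\phi:\mathrm{Hom}_{(V,\mathcal{B})}(V,W)\to W^{\mathcal{D}}$, $\phi(f)=f(\mathbf{1})$, is a linear isomorphism.
   Context: $\mathbb{F}$ is an algebraically closed field of odd prime characteristic $p$; vertex algebras and their modules over $\mathbb{F}$ are defined by the usual axioms with the Jacobi identity. $\mathcal{B}$ is the bialgebra with basis $\{\mathcal{D}^{(n)}\mid n\in\mathbb{N}\}$, $\mathcal{D}^{(0)}=1$, $\mathcal{D}^{(m)}\mathcal{D}^{(n)}=\binom{m+n}{n}\mathcal{D}^{(m+n)}$, $\Delta(\mathcal{D}^{(n)})=\sum_{i=0}^n\mathcal{D}^{(n-i)}\otimes\mathcal{D}^{(i)}$, $\varepsilon(\mathcal{D}^{(n)})=\delta_{n,0}$; write $e^{x\mathcal{D}}=\sum_{n\ge0}x^n\mathcal{D}^{(n)}$. Every vertex algebra $V$ is a $\mathcal{B}$-module via $\mathcal{D}^{(n)}v=v_{-n-1}\mathbf{1}$. A $(V,\mathcal{B})$-module is a $V$-module $(W,Y_W)$ that is also a $\mathcal{B}$-module with $e^{x\mathcal{D}}Y_W(v,z)e^{-x\mathcal{D}}=Y_W(e^{x\mathcal{D}}v,z)$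 for all $v\in V$. $\mathrm{Hom}_{(V,\mathcal{B})}(V,W)$ is the space of maps that are both $V$-module and $\mathcal{B}$-module homomorphisms. *)

From HB Require Import structures.
From mathcomp Require Import all_boot all_order all_algebra.
Set Implicit Arguments. Unset Strict Implicit. Unset Printing Implicit Defensive.
Import Order.TTheory GRing.Theory Num.Theory.
Local Open Scope ring_scope.

(* Generalized binomial coefficient binom(l, i) for l : int, i : nat, as an integer:
   binom(n, i) = 'C(n, i) for n >= 0 and binom(-(n+1), i) = (-1)^i 'C(n+i, i). *)
Definition binz (l : int) (i : nat) : int :=
  match l with
  | Posz n => ('C(n, i))%:Z
  | Negz n => (-1) ^+ i * ('C(n + i, i))%:Z
  end.

Section VA.
Variable F : fieldType.

(* A vertex algebra structure on the F-vector space V, given by the modes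
   Y u n v = u_n v (Y(u,z) = sum_n u_n z^{-n-1}) and the vacuum one. *)
Definition is_vertex_algebra (V : lmodType F) (Y : V -> int -> V -> V) (one : V) : Prop :=
  [/\
      (forall a u1 u2 n v, Y (a *: u1 + u2) n v = a *: Y u1 n v + Y u2 n v),
      (forall a u n v1 v2, Y u n (a *: v1 + v2) = a *: Y u n v1 + Y u n v2),
      (* truncation: Y(u,z)v in V((z)) *)
      (forall u v, exists N : int, forall n : int, N <= n -> Y u n v = 0),
      (* Y(1,z) = id *)
      (forall n v, Y one n v = (if n == (-1)%R then v else 0)) /\
      (* creation: Y(v,z)1 in V[[z]] and its constant term is v *)
      ((forall v (n : int), 0 <= n -> Y v n one = 0) /\ (forall v, Y v (-1) one = v)) &
      (* Jacobi identity, in components (Borcherds identity); the infinite sums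
         over i are finite by truncation, and we ask equality of all long enough
         partial sums *)
      (forall (u v w : V) (l m n : int), exists K : nat, forall N : nat, (K <= N)%N ->
         \sum_(i < N) (binz m i)%:~R *: Y (Y u (l + i%:Z) v) (m + n - i%:Z) w =
         \sum_(i < N) ((-1) ^+ i * (binz l i)%:~R) *:
            (Y u (l + m - i%:Z) (Y v (n + i%:Z) w)
             - ((-1) ^+ `|l|%N) *: Y v (l + n - i%:Z) (Y u (m + i%:Z) w)))].

Definition is_va_module (V W : lmodType F) (Y : V -> int -> V -> V) (one : V)
    (YW : V -> int -> W -> W) : Prop :=
  [/\ (forall a u1 u2 n w, YW (a *: u1 + u2) n w = a *: YW u1 n w + YW u2 n w),
      (forall a u n w1 w2, YW u n (a *: w1 + w2) = a *: YW u n w1 + YW u n w2),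
      (forall u w, exists N : int, forall n : int, N <= n -> YW u n w = 0),
      (forall n w, YW one n w = (if n == (-1)%R then w else 0)) &
      (forall (u v : V) (w : W) (l m n : int), exists K : nat, forall N : nat, (K <= N)%N ->
         \sum_(i < N) (binz m i)%:~R *: YW (Y u (l + i%:Z) v) (m + n - i%:Z) w =
         \sum_(i < N) ((-1) ^+ i * (binz l i)%:~R) *:
            (YW u (l + m - i%:Z) (YW v (n + i%:Z) w)
             - ((-1) ^+ `|l|%N) *: YW v (l + n - i%:Z) (YW u (m + i%:Z) w)))].

(* The B-action on V: D^(n) v = v_{-n-1} 1. *)
Definition DV (V : lmodType F) (Y : V -> int -> V -> V) (one : V) (n : nat) (v : V) : V :=
  Y v (- (n%:Z) - 1) one.

(* D n is the action of D^(n) on W: a B-module structure on W. *)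
Definition is_B_module (W : lmodType F) (D : nat -> W -> W) : Prop :=
  [/\ (forall n a w1 w2, D n (a *: w1 + w2) = a *: D n w1 + D n w2),
      (forall w, D 0%N w = w) &
      (forall m n w, D m (D n w) = ('C(m + n, n))%:R *: D (m + n)%N w)].

(* (V,B)-module: V-module that is a B-module with
   e^{xD} Y_W(v,z) e^{-xD} = Y_W(e^{xD} v, z), written coefficientwise in x^k z^{-m-1}. *)
Definition is_VB_module (V W : lmodType F) (Y : V -> int -> V -> V) (one : V)
    (YW : V -> int -> W -> W) (D : nat -> W -> W) : Prop :=
  [/\ is_va_module Y one YW, is_B_module D &
      (forall (v : V) (k : nat) (m : int) (w : W),
         \sum_(i < k.+1) ((-1) ^+ (k - i)) *: D i (YW v m (D (k - i)%N w))
         = YW (DV Y one k v) m w)].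

Definition is_V_hom (V W : lmodType F) (Y : V -> int -> V -> V)
    (YW : V -> int -> W -> W) (f : V -> W) : Prop :=
  (forall a v1 v2, f (a *: v1 + v2) = a *: f v1 + f v2) /\
  (forall u n v, f (Y u n v) = YW u n (f v)).

Definition is_B_hom (V W : lmodType F) (Y : V -> int -> V -> V) (one : V)
    (D : nat -> W -> W) (f : V -> W) : Prop :=
  forall n v, f (DV Y one n v) = D n (f v).

Definition is_VB_hom (V W : lmodType F) (Y : V -> int -> V -> V) (one : V)
    (YW : V -> int -> W -> W) (D : nat -> W -> W) (f : V -> W) : Prop :=
  is_V_hom Y YW f /\ is_B_hom Y one D f.

Definition in_WD (W : lmodType F) (D : nat -> W -> W) (w : W) : Prop :=
  forall n : nat, (0 < n)%N -> D n w = 0.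

End VA.

From HB Require Import structures.
From mathcomp Require Import all_boot all_order all_algebra.
From mathcomp Require Import zify.
From Stdlib Require Import FunctionalExtensionality.
Set Implicit Arguments. Unset Strict Implicit. Unset Printing Implicit Defensive.
Import Order.TTheory GRing.Theory Num.Theory.
Local Open Scope ring_scope.

(* A V-module map f : V -> W is determined by w = f 1, because f v = f (v_{-1} 1) = v_{-1} w.
   The point is that every w in W^D is vacuum-like (v_n w = 0 for n >= 0): the Borcherds
   identity for v, 1 with indices (-q-1, 0, n+q) gives
   D^(q) (v_{n+q} w) = (D^(q) v)_{n+q} w = +- binom(q+n, n) v_n w,
   and the left side vanishes once n+q exceeds the truncation order of v on w.  Taking q a
   large power of the characteristic makes binom(q+n, n) nonzero in F (compare coefficients
   in (X+1)^(q+n) = (X+1)^n (X^q+1)); in characteristic 0 any q works.  For vacuum-like w, v |-> v_{-1} w is then a V-module map by the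
   iterate formula, and a B-module map since the (V,B)-compatibility collapses to
   D^(k) (v_m w) = (D^(k) v)_m w. *)

Lemma coef_XaddC1_exp (R : nzRingType) m n :
  (('X + 1 : {poly R}) ^+ m)`_n = ('C(m, n))%:R.
Proof.
rewrite exprD1n coef_sum.
under eq_bigr => i _ do rewrite coefMn coefXn.
have [ltnm | ltmn] := ltnP n m.+1.
  rewrite (bigD1 (Ordinal ltnm)) //= eqxx big1 ?addr0 // => i.
  by rewrite eq_sym -val_eqE => /negPf ->; rewrite mul0rn.
by rewrite bin_small // big1 // => i _; rewrite gtn_eqF ?mul0rn // (leq_trans _ ltmn).
Qed.

Lemma XaddC1_exp_pchar (R : comNzRingType) p e : p \in [pchar R] ->
  ('X + 1 : {poly R}) ^+ (p ^ e) = 'X^(p ^ e) + 1.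
Proof.
move=> charRp; rewrite exprDn_pchar ?expr1n // pnatX pnatE ?(pcharf_prime charRp) //.
by rewrite pchar_poly charRp.
Qed.

Lemma bin_pchar_neq0 (R : comNzRingType) p e n : p \in [pchar R] -> (n < p ^ e)%N ->
  ('C(p ^ e + n, n))%:R != 0 :> R.
Proof.
move=> charRp lt_n_pe; rewrite -coef_XaddC1_exp exprD XaddC1_exp_pchar //.
by rewrite mulrDl mul1r coefD coefXnM lt_n_pe add0r coef_XaddC1_exp binn oner_neq0.
Qed.

Lemma bin_neq0_unbounded (R : idomainType) n N :
  exists2 q, (N <= q)%N & ('C(q + n, n))%:R != 0 :> R.
Proof.
have [binN0 | ] := eqVneq ('C(N + n, n))%:R (0 : R); last by exists N.
have [|p charRp] := natf0_pchar _ (introT eqP binN0); first by rewrite bin_gt0 leq_addl.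
have p_gt1 := prime_gt1 (pcharf_prime charRp).
exists (p ^ (N + n))%N; first exact: leq_trans (leq_addr n N) (ltnW (ltn_expl _ p_gt1)).
exact: bin_pchar_neq0 charRp (leq_ltn_trans (leq_addl N n) (ltn_expl _ p_gt1)).
Qed.

Lemma binz0 l : binz l 0 = 1.
Proof. by case: l => n; rewrite /= bin0 // expr0 mul1r. Qed.

Lemma map0_linear (R : pzRingType) (M N : lmodType R) (f : M -> N) :
  (forall a x y, f (a *: x + y) = a *: f x + f y) -> f 0 = 0.
Proof. by move=> f_lin; have := f_lin (-1) 0 0; rewrite scaler0 addr0 scaleN1r addNr. Qed.

Section VBModule.
Variables (F : fieldType) (V W : lmodType F) (Y : V -> int -> V -> V) (one : V)
  (YW : V -> int -> W -> W) (D : nat -> W -> W).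
Hypothesis VBmod : is_VB_module Y one YW D.

Lemma YWr0 u n : YW u n 0 = 0.
Proof. by have [[_ YW_lin _ _ _] _ _] := VBmod; apply: map0_linear. Qed.

Lemma Dr0 n : D n 0 = 0.
Proof. by have [_ [D_lin _ _] _] := VBmod; apply: map0_linear. Qed.

Lemma YW_one_neq (n : int) w : n != -1 -> YW one n w = 0.
Proof. by have [[_ _ _ YW_one _] _ _] := VBmod; rewrite YW_one => /negPf ->. Qed.

Lemma YW_one_vac w : YW one (-1) w = w.
Proof. by have [[_ _ _ YW_one _] _ _] := VBmod; rewrite YW_one eqxx. Qed.

Lemma YW_iterate u v w (l n : int) : exists K : nat, forall N : nat, (K <= N)%N ->
  YW (Y u l v) n w = \sum_(i < N) ((-1) ^+ i * (binz l i)%:~R) *: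
     (YW u (l - i%:Z) (YW v (n + i%:Z) w)
      - ((-1) ^+ `|l|%N) *: YW v (l + n - i%:Z) (YW u i w)).
Proof.
have [[_ _ _ _ jacobi] _ _] := VBmod.
have [K jacK] := jacobi u v w l 0 n.
exists K.+1 => -[//|N] leKN; have := jacK N.+1 (ltnW leKN).
rewrite big_ord_recl big1 => [|i _]; last by rewrite /= scale0r.
rewrite /= bin0 scale1r -[Posz 0]/(0 : int) !addr0 !add0r => ->.
by apply: eq_bigr => i _; rewrite add0r.
Qed.

Lemma D_YW_WD w v k m : in_WD D w -> D k (YW v m w) = YW (DV Y one k v) m w.
Proof.
have [_ [_ D0id _] compat] := VBmod; move=> w_WD.
rewrite -compat big_ord_recr /= subnn expr0 scale1r D0id big1 ?add0r // => i _.
by rewrite w_WD ?subn_gt0 // YWr0 Dr0 scaler0.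
Qed.

Lemma YW_WD_cancel w v (n q : nat) : in_WD D w ->
  ('C(q + n, n))%:R != 0 :> F -> YW v (n + q)%N w = 0 -> YW v n w = 0.
Proof.
move=> w_WD binq_neq0 vanish.
have [K iterK] := YW_iterate v one w (Negz q) (n + q)%N.
have ltnK : (n < maxn K n.+1)%N by rewrite leq_max leqnn orbT.
have := iterK _ (leq_maxl K n.+1).
have -> : Y v (Negz q) one = DV Y one q v by rewrite /DV NegzE; congr (Y _ _ _); lia.
rewrite -D_YW_WD // vanish Dr0.
(* By the vacuum axiom for 1, only the term i = n survives. *)
rewrite (bigD1 (Ordinal ltnK)) //= big1 ?addr0 => [|i]; last first.
  rewrite -val_eqE /= => ne_in.
  by rewrite YW_one_neq ?YWr0 ?YW_one_neq ?scaler0 ?subr0 ?scaler0 //; lia.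
have -> : Negz q + (n + q)%N - n%:Z = -1 by rewrite NegzE; lia.
rewrite YW_one_vac YW_one_neq ?YWr0 ?add0r ?scalerN ?scalerA; last by lia.
move/esym/eqP; rewrite oppr_eq0 scaler_eq0 => /orP[|/eqP //].
by rewrite !mulf_eq0 !signr_eq0 intrM mulf_eq0 intr_sign signr_eq0 /= (negPf binq_neq0).
Qed.

Lemma YW_WD_nonneg w v (n : nat) : in_WD D w -> YW v n w = 0.
Proof.
have [[_ _ trunc _ _] _ _] := VBmod; move=> w_WD.
have [N0 truncN0] := trunc v w.
have [q le_N0q binq_neq0] := bin_neq0_unbounded F n `|N0|.
by apply: YW_WD_cancel w_WD binq_neq0 _; apply: truncN0; lia.
Qed.

Lemma VB_hom_YW_WD w : in_WD D w -> is_VB_hom Y one YW D (fun v => YW v (-1) w).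
Proof.
have [[YW_lin _ _ _ _] _ _] := VBmod; move=> w_WD.
split; [split => [a v1 v2 | u n v] /= | move=> n v /=]; first exact: YW_lin.
- have [K iterK] := YW_iterate u v w n (-1).
  rewrite (iterK K.+1 (leqnSn K)) big_ord_recl big1 => [|i _].
    rewrite /= -[Posz 0]/(0 : int) (YW_WD_nonneg _ 0) // YWr0 (@scaler0 F W) subr0.
    by rewrite binz0 expr0 mul1r scale1r !addr0.
  have -> : -1 + (bump 0 i)%:Z = i by rewrite /bump; lia.
  by rewrite !YW_WD_nonneg // !YWr0 (@scaler0 F W) subr0 (@scaler0 F W).
- by rewrite D_YW_WD.
Qed.

Lemma VB_hom_scale_add a f g : is_VB_hom Y one YW D f -> is_VB_hom Y one YW D g ->
  is_VB_hom Y one YW D (fun v => a *: f v + g v).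
Proof.
have [[_ YW_lin _ _ _] [D_lin _ _] _] := VBmod.
move=> [[f_lin fY] fB] [[g_lin gY] gB]; split; [split|] => /=.
- by move=> b v1 v2; rewrite f_lin g_lin !scalerDr !scalerA mulrC addrACA.
- by move=> u n v; rewrite fY gY YW_lin.
- by move=> n v; rewrite fB gB D_lin.
Qed.

Hypothesis VA : is_vertex_algebra Y one.

Lemma V_hom_expand f v : is_V_hom Y YW f -> f v = YW v (-1) (f one).
Proof. by have [_ _ _ [_ [_ Y_one_create]] _] := VA; case=> _ fY; rewrite -fY Y_one_create. Qed.

Lemma B_hom_iff_WD f : is_V_hom Y YW f -> is_B_hom Y one D f <-> in_WD D (f one).
Proof.
have [_ _ _ [Y_one _] _] := VA; move=> fV; split => [fB n n_gt0 | w_WD n v].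
- have n1_neq : - n%:Z - 1 != -1 by lia.
  rewrite -fB /DV Y_one (negPf n1_neq).
  exact: map0_linear (proj1 fV).
- by rewrite (V_hom_expand (DV Y one n v) fV) (V_hom_expand v fV) D_YW_WD.
Qed.

Lemma V_hom_eq f g : is_V_hom Y YW f -> is_V_hom Y YW g -> f one = g one -> f =1 g.
Proof. by move=> fV gV fg1 v; rewrite (V_hom_expand _ fV) (V_hom_expand _ gV) fg1. Qed.

End VBModule.

Theorem lemma2p6 (p : nat) (F : closedFieldType) (V W : lmodType F)
    (Y : V -> int -> V -> V) (one : V) (YW : V -> int -> W -> W) (D : nat -> W -> W) :
  prime p -> odd p -> p \in [pchar F] ->
  is_vertex_algebra Y one -> is_VB_module Y one YW D ->
  (* a V-module hom is a (V,B)-module hom iff f(1) lies in W^D *)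
  (forall f : V -> W, is_V_hom Y YW f -> (is_B_hom Y one D f <-> in_WD D (f one))) /\
  (* phi : Hom_{(V,B)}(V,W) -> W^D, f |-> f(1), is well defined and linear *)
  (forall f : V -> W, is_VB_hom Y one YW D f -> in_WD D (f one)) /\
  (forall (a : F) (f g : V -> W), is_VB_hom Y one YW D f -> is_VB_hom Y one YW D g ->
     is_VB_hom Y one YW D (fun v => a *: f v + g v)) /\
  (* phi is injective *)
  (forall f g : V -> W, is_VB_hom Y one YW D f -> is_VB_hom Y one YW D g ->
     f one = g one -> f = g) /\
  (* phi is surjective *)
  (forall w : W, in_WD D w -> exists f : V -> W, is_VB_hom Y one YW D f /\ f one = w).
Proof.
move=> _ _ _ VA VBmod; split; first exact: B_hom_iff_WD.
split; first by move=> f [fV fB]; apply/(B_hom_iff_WD VBmod VA fV).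
split; first exact: VB_hom_scale_add.
split.
  move=> f g [fV _] [gV _] fg1.
  exact: functional_extensionality (V_hom_eq VA fV gV fg1).
move=> w w_WD; exists (fun v => YW v (-1) w); split; first exact: VB_hom_YW_WD.
exact: YW_one_vac VBmod w.
Qed.
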